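(* Let $m\ge2$ be even, $n\ge2$, and let $g,h\in\mathbb{R}$ with $h\neq0$ and $g/h\notin\mathbb{Z}$. Let $\mathcal{A}$ be the Cauchy-Hankel tensor of order $m$ and dimension $n$ with entries $a_{i_1\cdots i_m}=\frac{1}{g+h(i_1+\cdots+i_m)}$, and let $f(x)=\mathcal{A}x^m$. Then $\mathcal{A}$ is positive definite if and only if $f$ is strictly monotonically increasing on $\mathbb{R}^n_+$.
   Context: $\mathcal{A}x^m=\sum_{i_1,\dots,i_m}a_{i_1\cdots i_m}x_{i_1}\cdots x_{i_m}$. Positive definite: $\mathcal{A}x^m>0$ for all nonzero $x\in\mathbb{R}^n$. $\mathbb{R}^n_+=\{x\in\mathbb{R}^n: x_i\ge0\ \forall i\}$; for vectors, $x\ge y$ means $x_i\ge y_i$ for all $i$. $f$ is strictly monotonically increasing on $\mathbb{R}^n_+$ if $f(x)>f(y)$ for all $x,y\in\mathbb{R}^n_+$ with $x\ge y$ and $x\neq y$. *)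

From Stdlib Require Import Reals List ZArith Arith.
Open Scope R_scope.

(* Vectors in R^n are functions nat -> R, with coordinates x 1, ..., x n
   (1-indexed, as in the paper). Tensor entries are indexed by lists
   [i_1; ...; i_m] of indices in {1,...,n}. *)

Fixpoint rsum (n : nat) (f : nat -> R) : R :=
  match n with
  | O => 0
  | S k => rsum k f + f (S k)
  end.

Fixpoint tsum (n m : nat) (F : list nat -> R) : R :=
  match m with
  | O => F nil
  | S k => rsum n (fun i => tsum n k (fun l => F (i :: l)))
  end.

Definition tensor := list nat -> R.

Definition xprod (x : nat -> R) (l : list nat) : R :=
  fold_right (fun i acc => x i * acc) 1 l.

Definition tform (n m : nat) (A : tensor) (x : nat -> R) : R :=
  tsum n m (fun l => A l * xprod x l).

Definition cauchy_hankel (g h : R) : tensor :=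
  fun l => / (g + h * INR (list_sum l)).

Definition nonzero_vec (n : nat) (x : nat -> R) : Prop :=
  exists i, (1 <= i <= n)%nat /\ x i <> 0.

Definition positive_definite (n m : nat) (A : tensor) : Prop :=
  forall x : nat -> R, nonzero_vec n x -> tform n m A x > 0.

Definition nonneg_vec (n : nat) (x : nat -> R) : Prop :=
  forall i, (1 <= i <= n)%nat -> 0 <= x i.

Definition vge (n : nat) (x y : nat -> R) : Prop :=
  forall i, (1 <= i <= n)%nat -> y i <= x i.

Definition vneq (n : nat) (x y : nat -> R) : Prop :=
  exists i, (1 <= i <= n)%nat /\ x i <> y i.

Definition strictly_increasing_on_nonneg (n : nat) (f : (nat -> R) -> R) : Prop :=
  forall x y : nat -> R, nonneg_vec n x -> nonneg_vec n y ->
    vge n x y -> vneq n x y -> f x > f y.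

From Stdlib Require Import Reals List ZArith Arith Lra Lia Psatz Classical.
Open Scope R_scope.

(* Both conditions are equivalent to the positivity of the extreme
   denominators [g + h m] and [g + h m n], hence of every denominator
   [g + h s] with [m <= s <= m n].  Evaluating at a unit vector [e_i] gives
   [f(e_i) = 1/(g + h m i)], so either condition forces the extreme
   denominators to be positive.  Conversely, with all entries positive, [f] is
   a sum of monomials with positive coefficients, hence strictly increasing on
   the orthant.  For positive definiteness write [m = 2k] and group the multi-index
   into two halves by their index sums [s] and [t]: then
   [f(x) = sum_(s,t) c_s c_t / (a_s + a_t)] with [a_s = g/2 + h s] and [c_s]
   the coefficient of [t^s] in [(sum_i x_i t^i)^k].  This is a Cauchy
   quadratic form with distinct positive nodes, which is positive definite,
   and [c] is nonzero at [s = k i0] for the first nonzero coordinate [i0] of [x]. *)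

Lemma rsum_ext n f g :
  (forall i, (1 <= i <= n)%nat -> f i = g i) -> rsum n f = rsum n g.
Proof.
  induction n as [|n IH]; simpl; intros H; auto.
  rewrite IH, H; [auto | lia | intros; apply H; lia].
Qed.

Lemma rsum_plus n f g : rsum n (fun i => f i + g i) = rsum n f + rsum n g.
Proof. induction n as [|n IH]; simpl; [lra | rewrite IH; lra]. Qed.

Lemma rsum_minus n f g : rsum n (fun i => f i - g i) = rsum n f - rsum n g.
Proof. induction n as [|n IH]; simpl; [lra | rewrite IH; lra]. Qed.

Lemma rsum_scal n c f : rsum n (fun i => c * f i) = c * rsum n f.
Proof. induction n as [|n IH]; simpl; [lra | rewrite IH; lra]. Qed.

Lemma rsum_zero n f : (forall i, (1 <= i <= n)%nat -> f i = 0) -> rsum n f = 0.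
Proof.
  intros H. rewrite (rsum_ext n f (fun i => 0 * f i)), rsum_scal; [ring|].
  intros i Hi; rewrite H; auto; ring.
Qed.

Lemma rsum_swap n N F :
  rsum n (fun i => rsum N (fun s => F i s)) = rsum N (fun s => rsum n (fun i => F i s)).
Proof.
  induction n as [|n IH]; simpl.
  - symmetry; apply rsum_zero; auto.
  - rewrite IH, <- rsum_plus; auto.
Qed.

Lemma rsum_square n u : rsum n (fun j => rsum n (fun k => u j * u k)) = rsum n u ^ 2.
Proof.
  rewrite (rsum_ext _ _ (fun j => rsum n u * u j)), rsum_scal; [ring|].
  intros j _; rewrite rsum_scal; ring.
Qed.

Lemma rsum_nonneg n f : (forall i, (1 <= i <= n)%nat -> 0 <= f i) -> 0 <= rsum n f.
Proof.
  induction n as [|n IH]; simpl; intros H; [lra|].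
  assert (0 <= f (S n)) by (apply H; lia).
  assert (0 <= rsum n f) by (apply IH; intros; apply H; lia).
  lra.
Qed.

Lemma rsum_ge_term n f p :
  (forall i, (1 <= i <= n)%nat -> 0 <= f i) -> (1 <= p <= n)%nat -> f p <= rsum n f.
Proof.
  induction n as [|n IH]; simpl; intros H Hp; [lia|].
  assert (0 <= f (S n)) by (apply H; lia).
  destruct (Nat.eq_dec p (S n)) as [->|Hne].
  - assert (0 <= rsum n f) by (apply rsum_nonneg; intros; apply H; lia). lra.
  - assert (f p <= rsum n f) by (apply IH; [intros; apply H|]; lia). lra.
Qed.

Lemma rsum_delta N p v :
  (1 <= p <= N)%nat -> rsum N (fun s => if Nat.eqb p s then v s else 0) = v p.
Proof.
  induction N as [|N IH]; intros Hp; [lia|]. simpl.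
  destruct (Nat.eq_dec p (S N)) as [->|Hne].
  - rewrite Nat.eqb_refl, rsum_zero; [ring|].
    intros i Hi. destruct (Nat.eqb_spec (S N) i); [lia | auto].
  - rewrite IH by lia. destruct (Nat.eqb_spec p (S N)); [lia | ring].
Qed.

Definition inrange (n : nat) (l : list nat) : Prop := Forall (fun i => (1 <= i <= n)%nat) l.

Lemma tsum_ext n m F G :
  (forall l, length l = m -> inrange n l -> F l = G l) -> tsum n m F = tsum n m G.
Proof.
  revert F G; induction m as [|m IH]; simpl; intros F G H.
  - apply H; [auto | constructor].
  - apply rsum_ext; intros i Hi. apply IH.
    intros l Hl Hr. apply H; [simpl; auto | constructor; auto].
Qed.

Lemma tsum_minus n m F G : tsum n m (fun l => F l - G l) = tsum n m F - tsum n m G.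
Proof.
  revert F G; induction m as [|m IH]; simpl; intros; auto.
  rewrite <- rsum_minus. apply rsum_ext; intros; apply IH.
Qed.

Lemma tsum_scal n m c F : tsum n m (fun l => c * F l) = c * tsum n m F.
Proof.
  revert F; induction m as [|m IH]; simpl; intros; auto.
  rewrite <- rsum_scal. apply rsum_ext; intros; apply IH.
Qed.

Lemma tsum_zero n m F : (forall l, length l = m -> inrange n l -> F l = 0) -> tsum n m F = 0.
Proof.
  intros H. rewrite (tsum_ext n m F (fun l => 0 * F l)), tsum_scal; [ring|].
  intros l Hl Hr; rewrite H; auto; ring.
Qed.

Lemma tsum_nonneg n m F :
  (forall l, length l = m -> inrange n l -> 0 <= F l) -> 0 <= tsum n m F.
Proof.
  revert F; induction m as [|m IH]; simpl; intros F H.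
  - apply H; [auto | constructor].
  - apply rsum_nonneg; intros i Hi. apply IH.
    intros l Hl Hr; apply H; [simpl; auto | constructor; auto].
Qed.

Lemma tsum_ge_term n m F l0 :
  (forall l, length l = m -> inrange n l -> 0 <= F l) ->
  length l0 = m -> inrange n l0 -> F l0 <= tsum n m F.
Proof.
  revert F l0; induction m as [|m IH]; simpl; intros F l0 H Hl Hr.
  - destruct l0; simpl in Hl; [lra | lia].
  - destruct l0 as [|i l0]; simpl in Hl; [lia|]. inversion Hr; subst.
    assert (Hsub : forall j l, length l = m -> inrange n l -> (1 <= j <= n)%nat ->
                              0 <= F (j :: l)).
    { intros j l Hl' Hr' Hj; apply H; [simpl; auto | constructor; auto]. }
    eapply Rle_trans; [|apply rsum_ge_term with (p := i); auto].
    + apply (IH (fun l => F (i :: l))); auto.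
    + intros j Hj. apply tsum_nonneg; auto.
Qed.

Lemma tsum_app n a b F :
  tsum n (a + b) F = tsum n a (fun l1 => tsum n b (fun l2 => F (l1 ++ l2))).
Proof. revert F; induction a as [|a IH]; simpl; intros; auto. apply rsum_ext; intros; apply IH. Qed.

Lemma tsum_rsum_swap n k N F :
  tsum n k (fun l => rsum N (fun s => F l s)) = rsum N (fun s => tsum n k (fun l => F l s)).
Proof.
  revert F; induction k as [|k IH]; simpl; intros; auto.
  rewrite <- rsum_swap. apply rsum_ext; intros; apply IH.
Qed.

Lemma xprod_cons x j l : xprod x (j :: l) = x j * xprod x l.
Proof. reflexivity. Qed.

Lemma xprod_app x l1 l2 : xprod x (l1 ++ l2) = xprod x l1 * xprod x l2.
Proof.
  induction l1 as [|j l1 IH]; [simpl; ring|].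
  rewrite <- app_comm_cons, !xprod_cons, IH; ring.
Qed.

Lemma tsum_xprod n k y : tsum n k (xprod y) = rsum n y ^ k.
Proof.
  induction k as [|k IH]; simpl; auto.
  rewrite Rmult_comm, <- rsum_scal. apply rsum_ext; intros i _.
  change (tsum n k (fun l => y i * xprod y l) = rsum n y ^ k * y i).
  rewrite tsum_scal, IH; ring.
Qed.

Definition cauchy_form (N : nat) (a q : nat -> R) : R :=
  rsum N (fun j => rsum N (fun k => q j * q k / (a j + a k))).

Lemma cauchy_form_last_zero N a q :
  q (S N) = 0 -> cauchy_form (S N) a q = cauchy_form N a q.
Proof.
  intros Hq. unfold cauchy_form. simpl. rewrite rsum_plus, Hq.
  rewrite (rsum_zero N (fun j => q j * 0 / _)), (rsum_zero N (fun k => 0 * q k / _)).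
  - unfold Rdiv; ring.
  - intros; unfold Rdiv; ring.
  - intros; unfold Rdiv; ring.
Qed.

(* One step of Gaussian elimination on the Cauchy matrix [1/(a_j + a_k)],
   pivoting at a node [A]: the remaining form is again a Cauchy form, in the
   rescaled weights [q_j (a_j - A)/(a_j + A)]. *)
Lemma cauchy_form_split N a q A :
  A > 0 -> (forall j, (1 <= j <= N)%nat -> q j <> 0 -> a j > 0) ->
  cauchy_form N a q =
  rsum N (fun j => q j * (2 * A / (A + a j))) ^ 2 / (2 * A) +
  cauchy_form N a (fun j => q j * (a j - A) / (a j + A)).
Proof.
  intros HA Hpos. unfold cauchy_form.
  set (u := fun j => q j * (2 * A / (A + a j))).
  set (q' := fun j => q j * (a j - A) / (a j + A)).
  transitivity (rsum N (fun j => rsum N (fun k =>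
                  / (2 * A) * (u j * u k) + q' j * q' k / (a j + a k)))).
  - apply rsum_ext; intros j Hj; apply rsum_ext; intros k Hk.
    unfold u, q'.
    destruct (Req_dec (q j) 0) as [->|Hj0]; [unfold Rdiv; ring|].
    destruct (Req_dec (q k) 0) as [->|Hk0]; [unfold Rdiv; ring|].
    assert (a j > 0) by auto. assert (a k > 0) by auto.
    field; repeat split; lra.
  - rewrite (rsum_ext N _ (fun j => / (2 * A) * rsum N (fun k => u j * u k) +
                                    rsum N (fun k => q' j * q' k / (a j + a k))))
      by (intros; rewrite <- rsum_scal, <- rsum_plus; reflexivity).
    rewrite rsum_plus, rsum_scal, rsum_square. unfold q', Rdiv; ring.
Qed.

Lemma cauchy_form_nonneg_definite N a q :
  (forall j, (1 <= j <= N)%nat -> q j <> 0 -> a j > 0) ->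
  (forall j k, (1 <= j <= N)%nat -> (1 <= k <= N)%nat -> a j = a k -> j = k) ->
  0 <= cauchy_form N a q /\
  (cauchy_form N a q = 0 -> forall j, (1 <= j <= N)%nat -> q j = 0).
Proof.
  revert q; induction N as [|N IH]; intros q Hpos Hinj.
  { split; [unfold cauchy_form; simpl; lra | intros _ j Hj; lia]. }
  assert (Hinj' : forall j k, (1 <= j <= N)%nat -> (1 <= k <= N)%nat -> a j = a k -> j = k)
    by (intros; apply Hinj; auto; lia).
  destruct (Req_dec (q (S N)) 0) as [Hq|Hq].
  - rewrite cauchy_form_last_zero by exact Hq.
    destruct (IH q) as [Hnn Hdef]; [intros; apply Hpos; auto; lia | exact Hinj' |].
    split; [exact Hnn|]. intros H0 j Hj.
    destruct (Nat.eq_dec j (S N)) as [->|Hne]; [exact Hq | apply Hdef; auto; lia].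
  - set (A := a (S N)). assert (HA : A > 0) by (apply Hpos; auto; lia).
    set (q' := fun j => q j * (a j - A) / (a j + A)).
    rewrite (cauchy_form_split (S N) a q A HA Hpos). fold q'.
    rewrite cauchy_form_last_zero by (unfold q', A; unfold Rdiv; ring).
    assert (Hq'pos : forall j, (1 <= j <= N)%nat -> q' j <> 0 -> a j > 0).
    { intros j Hj Hq'j. apply Hpos; [lia|]. intros E; apply Hq'j; unfold q'; rewrite E; unfold Rdiv; ring. }
    destruct (IH q' Hq'pos Hinj') as [Hnn Hdef].
    set (u := fun j => q j * (2 * A / (A + a j))).
    assert (Hsq : 0 <= rsum (S N) u ^ 2 / (2 * A))
      by (apply Rmult_le_pos; [nra | left; apply Rinv_0_lt_compat; lra]).
    split; [lra|]. intros H0. exfalso.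
    assert (Hq0 : forall j, (1 <= j <= N)%nat -> q j = 0).
    { intros j Hj. apply NNPP; intros Hqj.
      assert (a j > 0) by (apply Hpos; auto; lia).
      assert (a j <> A) by (intros E; assert (j = S N) by (apply Hinj; auto; lia); lia).
      apply Hqj. replace (q j) with (q' j * (a j + A) / (a j - A)) by (unfold q'; field; lra).
      rewrite (Hdef ltac:(lra) j Hj). unfold Rdiv; ring. }
    assert (Hu : rsum (S N) u = q (S N)).
    { simpl. rewrite rsum_zero by (intros j Hj; unfold u; rewrite Hq0 by exact Hj; ring).
      unfold u; fold A; field; lra. }
    rewrite Hu in Hsq, H0.
    assert (0 < q (S N) ^ 2 / (2 * A)).
    { apply Rdiv_lt_0_compat; [|lra]. rewrite <- Rsqr_pow2. apply Rsqr_pos_lt, Hq. }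
    lra.
Qed.

Definition indb (b : bool) : R := if b then 1 else 0.

Definition single (i : nat) (x : nat -> R) : nat -> R :=
  fun j => if Nat.eqb i j then x j else 0.

Lemma xprod_single i x l :
  xprod (single i x) l = xprod x l * indb (forallb (Nat.eqb i) l).
Proof.
  induction l as [|j l IH]; [unfold indb; simpl; ring|].
  rewrite !xprod_cons, IH. cbn [forallb]. unfold single.
  destruct (Nat.eqb i j); unfold indb; simpl; ring.
Qed.

Lemma tsum_xprod_single n k i x :
  (1 <= i <= n)%nat -> tsum n k (xprod (single i x)) = x i ^ k.
Proof. intros Hi. rewrite tsum_xprod. unfold single. rewrite rsum_delta; auto. Qed.

Lemma xprod_neq0 x l : xprod x l <> 0 -> Forall (fun j => x j <> 0) l.
Proof.
  induction l as [|j l IH]; intros H; constructor.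
  - intros E; apply H; rewrite xprod_cons, E; ring.
  - apply IH; intros E; apply H; rewrite xprod_cons, E; ring.
Qed.

Lemma xprod_repeat x i k : xprod x (repeat i k) = x i ^ k.
Proof. induction k as [|k IH]; simpl; auto. rewrite <- IH; reflexivity. Qed.

Lemma xprod_mono x y n l :
  nonneg_vec n y -> vge n x y -> inrange n l -> 0 <= xprod y l <= xprod x l.
Proof.
  intros Hy Hxy; induction l as [|j l IH]; intros Hr; [simpl; lra|].
  inversion Hr as [|? ? Hj Hl]; subst. rewrite !xprod_cons.
  specialize (IH Hl). specialize (Hy j Hj). specialize (Hxy j Hj). split; nra.
Qed.

Lemma list_sum_bounds n l : inrange n l -> (length l <= list_sum l <= length l * n)%nat.
Proof. induction 1; simpl; lia. Qed.

Lemma list_sum_ge_min i0 l : Forall (le i0) l -> (length l * i0 <= list_sum l)%nat.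
Proof. induction 1; simpl; lia. Qed.

Lemma list_sum_eqb_min i0 l :
  Forall (le i0) l -> Nat.eqb (list_sum l) (length l * i0) = forallb (Nat.eqb i0) l.
Proof.
  induction 1 as [|j l Hj Hl IH]; [reflexivity|]. simpl.
  destruct (Nat.eqb_spec i0 j) as [<-|Hne]; simpl.
  - rewrite <- IH. destruct (Nat.eqb_spec (list_sum l) (length l * i0)).
    + apply Nat.eqb_eq; lia.
    + apply Nat.eqb_neq; lia.
  - apply Nat.eqb_neq. pose proof (list_sum_ge_min i0 l Hl). lia.
Qed.

(* [sum_coef n k x s] is the coefficient of [t^s] in [(x_1 t + ... + x_n t^n)^k]. *)
Definition sum_coef (n k : nat) (x : nat -> R) (s : nat) : R :=
  tsum n k (fun l => xprod x l * indb (Nat.eqb (list_sum l) s)).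

Lemma tsum_group_by_sum n k N G psi :
  (1 <= k)%nat -> (k * n <= N)%nat ->
  tsum n k (fun l => G l * psi (list_sum l)) =
  rsum N (fun s => psi s * tsum n k (fun l => G l * indb (Nat.eqb (list_sum l) s))).
Proof.
  intros Hk HN.
  rewrite (tsum_ext _ _ _ (fun l => rsum N (fun s =>
             G l * (if Nat.eqb (list_sum l) s then psi s else 0)))).
  - rewrite tsum_rsum_swap. apply rsum_ext; intros s _.
    rewrite <- tsum_scal. apply tsum_ext; intros l _ _.
    unfold indb; destruct (Nat.eqb (list_sum l) s); ring.
  - intros l Hl Hr. rewrite rsum_scal, rsum_delta; auto.
    apply list_sum_bounds in Hr. rewrite Hl in Hr. nia.
Qed.

Lemma sum_coef_out_of_range n k x s :
  ~ (k <= s <= k * n)%nat -> sum_coef n k x s = 0.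
Proof.
  intros Hs. apply tsum_zero; intros l Hl Hr.
  apply list_sum_bounds in Hr. rewrite Hl in Hr.
  destruct (Nat.eqb_spec (list_sum l) s); [lia | unfold indb; ring].
Qed.

Lemma sum_coef_first_nonzero n k x i0 :
  (1 <= i0 <= n)%nat -> (forall j, (1 <= j < i0)%nat -> x j = 0) ->
  sum_coef n k x (k * i0) = x i0 ^ k.
Proof.
  intros Hi0 Hmin. unfold sum_coef.
  rewrite <- (tsum_xprod_single n k i0 x Hi0). apply tsum_ext; intros l Hl Hr.
  rewrite xprod_single. destruct (Req_dec (xprod x l) 0) as [->|Hx]; [ring|].
  rewrite <- Hl, list_sum_eqb_min; [reflexivity|].
  apply xprod_neq0 in Hx. unfold inrange in Hr. rewrite Forall_forall in Hx, Hr |- *.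
  intros j Hj. destruct (Nat.lt_ge_cases j i0); auto.
  exfalso; apply (Hx j Hj), Hmin. specialize (Hr j Hj); lia.
Qed.

Lemma exists_first_nonzero x p :
  (exists j, (1 <= j <= p)%nat /\ x j <> 0) ->
  exists i0, (1 <= i0 <= p)%nat /\ x i0 <> 0 /\ forall j, (1 <= j < i0)%nat -> x j = 0.
Proof.
  induction p as [|p IH]; intros [j [Hj Hx]]; [lia|].
  destruct (classic (exists j, (1 <= j <= p)%nat /\ x j <> 0)) as [He|Hn].
  - destruct (IH He) as [i0 [H1 [H2 H3]]]. exists i0; split; auto; lia.
  - assert (Hz : forall j, (1 <= j <= p)%nat -> x j = 0)
      by (intros j' Hj'; apply NNPP; intros Hx'; apply Hn; eauto).
    exists (S p). split; [lia|]. split.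
    + destruct (Nat.eq_dec j (S p)) as [<-|]; [exact Hx | rewrite Hz in Hx; [lra | lia]].
    + intros j' Hj'; apply Hz; lia.
Qed.

Lemma tform_cauchy_hankel_cauchy_form n k g h x :
  (1 <= k)%nat ->
  tform n (k + k) (cauchy_hankel g h) x =
  cauchy_form (k * n) (fun s => g / 2 + h * INR s) (sum_coef n k x).
Proof.
  intros Hk. set (N := (k * n)%nat).
  set (K := fun s t => / (g + h * (INR s + INR t))).
  set (psi := fun s => rsum N (fun t => K s t * sum_coef n k x t)).
  unfold tform. rewrite tsum_app.
  rewrite (tsum_ext _ _ _ (fun l1 => xprod x l1 * psi (list_sum l1))).
  - rewrite (tsum_group_by_sum n k N (xprod x) psi); auto.
    unfold cauchy_form. apply rsum_ext; intros s _.
    unfold psi. rewrite Rmult_comm, <- rsum_scal. apply rsum_ext; intros t _.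
    unfold K. fold (sum_coef n k x s).
    replace (g / 2 + h * INR s + (g / 2 + h * INR t)) with (g + h * (INR s + INR t)) by field.
    unfold Rdiv; ring.
  - intros l1 _ _.
    rewrite (tsum_ext _ _ _ (fun l2 => xprod x l1 * (xprod x l2 * K (list_sum l1) (list_sum l2)))).
    + rewrite tsum_scal. f_equal. unfold psi. apply tsum_group_by_sum; auto.
    + intros l2 _ _. unfold cauchy_hankel, K.
      rewrite list_sum_app, plus_INR, xprod_app. ring.
Qed.

Lemma affine_pos_between g h a b s :
  g + h * INR a > 0 -> g + h * INR b > 0 -> (a <= s <= b)%nat -> g + h * INR s > 0.
Proof.
  intros Ha Hb Hs.
  assert (INR a <= INR s) by (apply le_INR; lia).
  assert (INR s <= INR b) by (apply le_INR; lia).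
  destruct (Rle_or_lt 0 h); nra.
Qed.

Lemma cauchy_hankel_positive_definite n k g h :
  (1 <= k)%nat -> h <> 0 ->
  g + h * INR (k + k) > 0 -> g + h * INR ((k + k) * n) > 0 ->
  positive_definite n (k + k) (cauchy_hankel g h).
Proof.
  intros Hk Hh Hlo Hhi x Hx.
  rewrite tform_cauchy_hankel_cauchy_form by exact Hk.
  set (a := fun s => g / 2 + h * INR s).
  destruct (cauchy_form_nonneg_definite (k * n) a (sum_coef n k x)) as [Hnn Hdef].
  - intros s _ Hc.
    destruct (classic (k <= s <= k * n)%nat) as [Hs|Hs];
      [|exfalso; apply Hc, sum_coef_out_of_range, Hs].
    assert (g + h * INR (s + s) > 0) by (apply (affine_pos_between g h _ _ _ Hlo Hhi); nia).
    unfold a. rewrite plus_INR in *. lra.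
  - intros s t _ _ E. apply INR_eq, (Rmult_eq_reg_l h); [unfold a in E; lra | exact Hh].
  - destruct Hx as [j [Hj Hxj]].
    destruct (exists_first_nonzero x n) as [i0 [Hi0 [Hx0 Hmin]]]; [eauto|].
    assert (Hc : sum_coef n k x (k * i0) <> 0)
      by (rewrite sum_coef_first_nonzero; auto; apply pow_nonzero, Hx0).
    destruct Hnn as [Hpos|Hzero]; [exact Hpos|].
    exfalso; apply Hc, Hdef; [auto | nia].
Qed.

Lemma inrange_repeat n i k : (1 <= i <= n)%nat -> inrange n (repeat i k).
Proof. intros H. apply Forall_forall. intros j Hj. apply repeat_spec in Hj; subst; auto. Qed.

Lemma pow_lt_compat x y k : (1 <= k)%nat -> 0 <= y < x -> y ^ k < x ^ k.
Proof.
  intros Hk Hy. induction k as [|[|k] IH]; [lia | simpl; lra |].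
  assert (y ^ S k < x ^ S k) by (apply IH; lia).
  assert (0 <= y ^ S k) by (apply pow_le; lra).
  simpl in *; nra.
Qed.

Lemma tform_strictly_increasing n m A :
  (1 <= m)%nat -> (forall l, length l = m -> inrange n l -> A l > 0) ->
  strictly_increasing_on_nonneg n (tform n m A).
Proof.
  intros Hm HA x y Hx Hy Hxy [i [Hi Hne]].
  apply Rlt_0_minus. unfold tform. rewrite <- tsum_minus.
  set (D := fun l => A l * xprod x l - A l * xprod y l).
  assert (HD : forall l, length l = m -> inrange n l -> 0 <= D l).
  { intros l Hl Hr. pose proof (xprod_mono x y n l Hy Hxy Hr). pose proof (HA l Hl Hr).
    unfold D; nra. }
  assert (Hrep : inrange n (repeat i m)) by (apply inrange_repeat, Hi).
  apply Rlt_le_trans with (D (repeat i m)).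
  - unfold D. rewrite !xprod_repeat.
    assert (y i ^ m < x i ^ m).
    { apply pow_lt_compat; auto. specialize (Hy i Hi). specialize (Hxy i Hi). lra. }
    pose proof (HA (repeat i m) (repeat_length i m) Hrep). nra.
  - apply tsum_ge_term; auto. apply repeat_length.
Qed.

Lemma cauchy_hankel_entries_pos n m g h :
  g + h * INR m > 0 -> g + h * INR (m * n) > 0 ->
  forall l, length l = m -> inrange n l -> cauchy_hankel g h l > 0.
Proof.
  intros Hlo Hhi l Hl Hr. apply Rinv_0_lt_compat.
  apply (affine_pos_between g h _ _ _ Hlo Hhi).
  apply list_sum_bounds in Hr. rewrite Hl in Hr; exact Hr.
Qed.

Definition evec (i : nat) : nat -> R := single i (fun _ => 1).

Lemma tform_cauchy_hankel_evec n m g h i :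
  (1 <= i <= n)%nat ->
  tform n m (cauchy_hankel g h) (evec i) = / (g + h * INR (m * i)).
Proof.
  intros Hi. unfold tform.
  rewrite (tsum_ext _ _ _ (fun l => / (g + h * INR (m * i)) * xprod (evec i) l)).
  - rewrite tsum_scal. unfold evec. rewrite tsum_xprod_single by exact Hi. rewrite pow1; ring.
  - intros l Hl _. unfold evec. rewrite xprod_single.
    destruct (forallb (Nat.eqb i) l) eqn:E; [|unfold indb; ring].
    assert (Hall : Forall (le i) l).
    { apply Forall_forall; intros j Hj.
      rewrite forallb_forall in E. specialize (E j Hj). apply Nat.eqb_eq in E; lia. }
    rewrite <- list_sum_eqb_min in E by exact Hall. apply Nat.eqb_eq in E.
    unfold cauchy_hankel. rewrite E, Hl. reflexivity.
Qed.

Lemma evec_nonzero n i : (1 <= i <= n)%nat -> nonzero_vec n (evec i).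
Proof. intros Hi. exists i; split; auto. unfold evec, single; rewrite Nat.eqb_refl; lra. Qed.

Lemma tform_evec_pos_of_increasing n m A i :
  (1 <= m)%nat -> (1 <= i <= n)%nat ->
  strictly_increasing_on_nonneg n (tform n m A) -> tform n m A (evec i) > 0.
Proof.
  intros Hm Hi Hmono.
  replace 0 with (tform n m A (fun _ => 0)).
  - apply Hmono; try (intros j _; unfold evec, single; destruct (Nat.eqb i j); lra).
    destruct (evec_nonzero n i Hi) as [j [Hj Hne]]. exists j; auto.
  - unfold tform. apply tsum_zero; intros l Hl _.
    destruct l as [|j l]; [simpl in Hl; lia | rewrite xprod_cons; ring].
Qed.

Theorem theorem5p2 (m n : nat) (g h : R) :
  (2 <= m)%nat -> Nat.Even m -> (2 <= n)%nat ->
  h <> 0 -> (forall z : Z, g / h <> IZR z) ->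
  (positive_definite n m (cauchy_hankel g h) <->
   strictly_increasing_on_nonneg n (tform n m (cauchy_hankel g h))).
Proof.
  (* The hypothesis on [g/h] only keeps the entries defined; with [/ 0 = 0]
     the equivalence holds without it. *)
  intros Hm [k Hk] Hn Hh _.
  assert (Hdenom : forall i, (1 <= i <= n)%nat ->
            tform n m (cauchy_hankel g h) (evec i) > 0 -> g + h * INR (m * i) > 0).
  { intros i Hi Hpos. rewrite tform_cauchy_hankel_evec in Hpos by exact Hi.
    rewrite <- (Rinv_inv (g + _)). apply Rinv_0_lt_compat, Hpos. }
  assert (Hends : (forall i, (1 <= i <= n)%nat -> tform n m (cauchy_hankel g h) (evec i) > 0) ->
            g + h * INR m > 0 /\ g + h * INR (m * n) > 0).
  { intros H. rewrite <- (Nat.mul_1_r m) at 1. split; apply Hdenom, H; lia. }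
  split; intros H.
  - destruct Hends as [Hlo Hhi]; [intros i Hi; apply H, evec_nonzero, Hi|].
    apply tform_strictly_increasing; [lia|].
    apply cauchy_hankel_entries_pos; assumption.
  - destruct Hends as [Hlo Hhi]; [intros i Hi; apply tform_evec_pos_of_increasing; auto; lia|].
    replace m with (k + k)%nat in * by lia.
    apply cauchy_hankel_positive_definite; auto; lia.
Qed.
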